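(* The allegories $\mathsf{StoneE}^\mathsf{R}$ and $\mathsf{SubS5^S}$ are equivalent. The equivalence sends an $\mathsf{S5}$-subordination space $(X,E)$ to $(\mathsf{Clop}(X),S_E)$ and a compatible closed relation $R$ to $S_R$, and its quasi-inverse sends an $\mathsf{S5}$-subordination algebra $(B,S)$ to $(\mathsf{Ult}(B),R_S)$ and a compatible subordination $T$ to $R_T$.
   Context: For a closed relation $R$ between Stone spaces, $S_R$ is the relation between clopen algebras given by $U\mathrel{S_R}V\iff R[U]\subseteq V$; for a relation $S$ between boolean algebras, $R_S$ is the relation between ultrafilter spaces given by $x\mathrel{R_S}y\iff S[x]\subseteq y$. A subordination $S\colon A\to B$ between boolean algebras is a relation satisfying: (S1) $0\mathrel{S}0$, $1\mathrel{S}1$; (S2) $a,b\mathrel{S}c\Rightarrow(a\vee b)\mathrel{S}c$; (S3) $a\mathrel{S}c,d\Rightarrow a\mathrel{S}(c\wedge d)$; (S4) $a\le b\mathrel{S}c\le d\Rightarrow a\mathrel{S}d$. An $\mathsf{S5}$-subordination on $B$ is a subordination $S\colon B\to B$ satisfying (S5) $a\mathrel{S}b\Rightarrow a\le b$; (S6) $a\mathrel{S}b\Rightarrow\neg b\mathrel{S}\neg a$; (S7) $a\mathrel{S}b\Rightarrow\exists c\,(a\mathrel{S}c$ and $c\mathrel{S}b)$. $\mathsf{StoneE}^\mathsf{R}$: objects are pairs $(X,E)$ with $X$ a Stone space and $E$ a closed equivalence relation on $X$ ($\mathsf{S5}$-subordination spaces); morphisms $(X,E)\to(X',E')$ are closed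 relations $R\subseteq X\times X'$ with $R\circ E=R=E'\circ R$ (compatible closed relations); identity on $(X,E)$ is $E$; composition is relational composition; hom-sets ordered by inclusion; dagger is converse relation. $\mathsf{SubS5^S}$: objects are pairs $(B,S)$ with $B$ a boolean algebra and $S$ an $\mathsf{S5}$-subordination ($\mathsf{S5}$-subordination algebras); morphisms $(B,S)\to(B',S')$ are subordinations $T\colon B\to B'$ with $T\circ S=T=S'\circ T$ (compatible subordinations); identity on $(B,S)$ is $S$; composition relational; hom-sets ordered by reverse inclusion; dagger $T^\dagger$ given by $b\mathrel{T^\dagger}a$ iff $\neg a\mathrel{T}\neg b$. An allegory is an order-enriched dagger category with binary meets in hom-sets, monotone dagger, and modular law $gf\wedge h\le(g\wedge hf^\dagger)f$; an equivalence of allegories is a functor that is an equivalence of categories, preserves binary meets of morphisms and commutes with daggers. *)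

From HB Require Import structures.
From mathcomp Require Import all_ssreflect_compat all_algebra.
From mathcomp Require Import all_classical topology.
Import Order.Theory.
Set Implicit Arguments. Unset Strict Implicit. Unset Printing Implicit Defensive.
Local Open Scope classical_set_scope.

Definition stone_space (X : topologicalType) : Prop :=
  [/\ compact [set: X], hausdorff_space X & zero_dimensional X].

Definition clopb (X : topologicalType) : {pred (set X)} := fun A => `[< clopen A >].

Arguments clopb : clear implicits.
Record Clop (X : topologicalType) := ClopSet { clop_val :> set X; clop_valP : clopb X clop_val }.

Section ClopInstances.
Variable X : topologicalType.
HB.instance Definition _ := [isSub for @clop_val X].
HB.instance Definition _ := [Choice of Clop X by <:].

Lemma clopb_meet : {in clopb X &, forall u v, (u `&` v)%O \in clopb X}.
Proof.
move=> A B /asboolP [oA cA] /asboolP [oB cB]; apply/asboolP; split.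
  exact: openI. exact: closedI.
Qed.
Lemma clopb_join : {in clopb X &, forall u v, (u `|` v)%O \in clopb X}.
Proof.
move=> A B /asboolP [oA cA] /asboolP [oB cB]; apply/asboolP; split.
  exact: openU. exact: closedU.
Qed.
Lemma clopb_bot : (\bot%O : set X) \in clopb X.
Proof. by apply/asboolP; split; [exact: open0 | exact: closed0]. Qed.
Lemma clopb_top : (\top%O : set X) \in clopb X.
Proof. by apply/asboolP; split; [exact: openT | exact: closedT]. Qed.

HB.instance Definition _ := Order.SubChoice_isTBSubLattice.Build
  _ _ (clopb X) set_display (Clop X)
  clopb_meet clopb_join clopb_bot clopb_top.


Lemma clop_meetUl : @left_distributive (Clop X) (Clop X) Order.meet Order.join.
Proof.
move=> x y z; apply: val_inj.
by rewrite /= meetUl.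
Qed.
HB.instance Definition _ := Order.Lattice_Meet_isDistrLattice.Build _ (Clop X) clop_meetUl.

Lemma clopb_compl (A : Clop X) : (~` (val A))%O \in clopb X.
Proof.
have /asboolP [oA cA] := clop_valP A; apply/asboolP; split.
  exact: closed_openC. exact: open_closedC.
Qed.
Definition clop_compl (A : Clop X) : Clop X := ClopSet (clopb_compl A).
Lemma clop_joinxC (A : Clop X) : (A `|` clop_compl A)%O = \top%O.
Proof. apply: val_inj; by rewrite /= joinxC. Qed.
Lemma clop_meetxC (A : Clop X) : (A `&` clop_compl A)%O = \bot%O.
Proof. apply: val_inj; by rewrite /= meetxC. Qed.
HB.instance Definition _ := Order.TBDistrLattice_hasComplement.Build _ (Clop X) clop_joinxC clop_meetxC.
End ClopInstances.

Section Ultrafilters.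
Context {d : Order.disp_t} (B : ctbDistrLatticeType d).
Local Open Scope order_scope.

Definition is_filter (F : set B) : Prop :=
  [/\ F \top,
      (forall a b, F a -> F b -> F (a `&` b)) &
      (forall a b, F a -> a <= b -> F b)].

Definition proper_filter (F : set B) : Prop := is_filter F /\ ~ F \bot.

Definition ultrafilter (F : set B) : Prop :=
  proper_filter F /\ (forall G, proper_filter G -> F `<=` G -> G = F).

Definition Ult : Type := set_type ultrafilter.
HB.instance Definition _ := Choice.on Ult.

Definition ult_basic : set (set Ult) :=
  [set [set x : Ult | (val x) a] | a in [set: B]].

HB.instance Definition _ :=
  isSubBaseTopological.Build Ult ult_basic id.
End Ultrafilters.
Arguments Ult {d} B.

(* rcomp R R' is the relational composite "first R, then R'",
   i.e. R' o R in the usual notation.                                       *)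
Definition rcomp {X Y Z : Type} (R : set (X * Y)) (R' : set (Y * Z)) : set (X * Z) :=
  [set p | exists y, R (p.1, y) /\ R' (y, p.2)].

Definition rconv {X Y : Type} (R : set (X * Y)) : set (Y * X) :=
  [set p | R (p.2, p.1)].

Definition rimage {X Y : Type} (R : set (X * Y)) (U : set X) : set Y :=
  [set y | exists2 x, U x & R (x, y)].

Definition closed_equiv {X : topologicalType} (E : set (X * X)) : Prop :=
  [/\ closed E, (forall x, E (x, x)),
      (forall x y, E (x, y) -> E (y, x)) &
      (forall x y z, E (x, y) -> E (y, z) -> E (x, z))].

Definition compat_closed_rel {X Y : topologicalType}
  (E : set (X * X)) (E' : set (Y * Y)) (R : set (X * Y)) : Prop :=
  [/\ closed R, rcomp E R = R & rcomp R E' = R].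

Definition is_meet_ccr {X Y : topologicalType}
  (E : set (X * X)) (E' : set (Y * Y)) (R1 R2 M : set (X * Y)) : Prop :=
  [/\ compat_closed_rel E E' M, M `<=` R1, M `<=` R2 &
      (forall N, compat_closed_rel E E' N -> N `<=` R1 -> N `<=` R2 -> N `<=` M)].

Definition bcomp {A B C : Type} (T : A -> B -> Prop) (T' : B -> C -> Prop) : A -> C -> Prop :=
  fun a c => exists b, T a b /\ T' b c.

Definition brel_sub {A B : Type} (T T' : A -> B -> Prop) : Prop :=
  forall a b, T a b -> T' a b.

Section Subordinations.
Local Open Scope order_scope.
Context {dA dB : Order.disp_t} {A : ctbDistrLatticeType dA} {B : ctbDistrLatticeType dB}.

Definition subordination (S : A -> B -> Prop) : Prop :=
  [/\ S \bot \bot /\ S \top \top,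
      (forall a b c, S a c -> S b c -> S (a `|` b) c),
      (forall a c e, S a c -> S a e -> S a (c `&` e)) &
      (forall a b c e, a <= b -> S b c -> c <= e -> S a e)].

Definition bdag (T : A -> B -> Prop) : B -> A -> Prop :=
  fun b a => T (~` a) (~` b).

Definition RS (T : A -> B -> Prop) : set (Ult A * Ult B) :=
  [set p | [set b | exists2 a, val p.1 a & T a b] `<=` val p.2].
End Subordinations.

Definition S5_subordination {d : Order.disp_t} {B : ctbDistrLatticeType d}
  (S : B -> B -> Prop) : Prop :=
  [/\ subordination S,
      (forall a b, S a b -> (a <= b)%O),
      (forall a b, S a b -> S (~` b)%O (~` a)%O) &
      (forall a b, S a b -> exists c, S a c /\ S c b)].

Definition compat_sub {dA dB : Order.disp_t}
  {A : ctbDistrLatticeType dA} {B : ctbDistrLatticeType dB}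
  (S : A -> A -> Prop) (S' : B -> B -> Prop) (T : A -> B -> Prop) : Prop :=
  [/\ subordination T, bcomp S T = T & bcomp T S' = T].

(* M is the binary meet of T1, T2 in the hom-poset SubS5^S((A,S),(B,S'))
   ordered by REVERSE inclusion (T <= T' iff T' \subseteq T) *)
Definition is_meet_csub {dA dB : Order.disp_t}
  {A : ctbDistrLatticeType dA} {B : ctbDistrLatticeType dB}
  (S : A -> A -> Prop) (S' : B -> B -> Prop) (T1 T2 M : A -> B -> Prop) : Prop :=
  [/\ compat_sub S S' M, brel_sub T1 M, brel_sub T2 M &
      (forall N, compat_sub S S' N -> brel_sub T1 N -> brel_sub T2 N -> brel_sub M N)].

Definition SR {X Y : topologicalType} (R : set (X * Y)) : Clop X -> Clop Y -> Prop :=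
  fun U V => rimage R (clop_val U) `<=` clop_val V.

From HB Require Import structures.
From mathcomp Require Import all_ssreflect_compat all_algebra.
From mathcomp Require Import all_classical topology.
Import Order.Theory.
Set Implicit Arguments. Unset Strict Implicit. Unset Printing Implicit Defensive.
Local Open Scope classical_set_scope.

(* Everything rests on Stone duality.  The clopens of Ult B are exactly the basic
   sets of ultrafilters containing some b, and a closed relation R is recovered
   from S_R because a pair outside R is separated by a clopen rectangle.  S_ is
   functorial by clopen interpolation: images of compact sets under closed
   relations are closed, so a clopen can be fitted between R[U] and the
   complement of R'^-1[~W].  R_ is functorial by the prime filter theorem, which
   lifts a filter along a subordination to an ultrafilter.  The unit and counit
   are the relations induced by the homeomorphism x |-> {clopens containing x}
   and by the isomorphism b |-> {ultrafilters containing b}. *)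

Section Ultrafilters.
Context {d : Order.disp_t} (B : ctbDistrLatticeType d).
Local Open Scope order_scope.
Implicit Types (a b c : B) (F I : set B) (x : Ult B).

Definition ideal I : Prop :=
  [/\ I \bot, (forall a b, I a -> I b -> I (a `|` b)) &
      (forall a b, I b -> a <= b -> I a)].

Lemma is_filter_upset a : is_filter [set c | a <= c].
Proof.
split=> /= [|c e ac ae|c e ac ce]; first exact: lex1.
  by rewrite lexI ac ae.
exact: le_trans ce.
Qed.

Lemma ideal_downset b : ideal [set c | c <= b].
Proof.
split=> /= [|c e cb eb|c e eb ce]; first exact: le0x.
  by rewrite leUx cb eb.
exact: le_trans eb.
Qed.

Definition filter_adjoin F c : set B := [set e | exists2 f, F f & f `&` c <= e].

Lemma is_filter_adjoin F c : is_filter F -> is_filter (filter_adjoin F c).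
Proof.
case=> FT FI _; split=> [|e1 e2 [f1 F1 h1] [f2 F2 h2]|e1 e2 [f F1 h1] h2].
- by exists \top; last exact: lex1.
- exists (f1 `&` f2); first exact: FI.
  rewrite lexI (le_trans _ h1) ?(le_trans _ h2) //; apply: leI2 => //.
    exact: leIr.
  exact: leIl.
- by exists f; last exact: le_trans h2.
Qed.

Lemma sub_filter_adjoin F c : F `<=` filter_adjoin F c.
Proof. by move=> f Ff; exists f => //; exact: leIl. Qed.

Lemma filter_adjoin_self F c : F \top -> filter_adjoin F c c.
Proof. by move=> FT; exists \top => //; rewrite meetC leIl. Qed.

Lemma ultrafilterP F :
  proper_filter F -> (forall a, F a \/ F (~` a)) -> ultrafilter F.
Proof.
move=> FP Fem; split=> // G [[_ GI _] G0] FG; apply/seteqP; split=> // g Gg.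
by case: (Fem g) => // /FG GNg; case: G0; rewrite -(meetxC g); exact: GI.
Qed.

Lemma ult_filter x : is_filter (val x).
Proof. by have /set_mem [[]] := valP x. Qed.

Lemma ult_proper x : ~ val x \bot.
Proof. by have /set_mem [[]] := valP x. Qed.

Lemma ult_max x G : proper_filter G -> val x `<=` G -> G = val x.
Proof. by have /set_mem [_] := valP x; apply. Qed.

Lemma ult_top x : val x \top.
Proof. by case: (ult_filter x). Qed.

Lemma ult_meet x a b : val x a -> val x b -> val x (a `&` b).
Proof. by case: (ult_filter x) => _ + _; apply. Qed.

Lemma ult_up x a b : val x a -> a <= b -> val x b.
Proof. by case: (ult_filter x) => _ _; apply. Qed.

Lemma ult_meetE x a b : val x (a `&` b) <-> val x a /\ val x b.
Proof.
split=> [xab|[]]; last exact: ult_meet.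
by split; apply: ult_up xab _; [exact: leIl | exact: leIr].
Qed.

Lemma ult_em x a : val x a \/ val x (~` a).
Proof.
have [|xNa] := pselect (val x a); [by left | right].
have [[f xf fa0]|G0] := pselect (filter_adjoin (val x) a \bot); last first.
  have Gx := is_filter_adjoin a (ult_filter x).
  have eG := ult_max (conj Gx G0) (@sub_filter_adjoin _ a).
  by case: xNa; rewrite -eG; exact: filter_adjoin_self (ult_top x).
by apply: ult_up xf _; rewrite -disj_leC -lex0.
Qed.

Lemma ult_notC x a : val x a -> ~ val x (~` a).
Proof. by move=> xa xNa; apply: (@ult_proper x); rewrite -(meetxC a); exact: ult_meet. Qed.

Lemma ult_complE x a : val x (~` a) <-> ~ val x a.
Proof. by split=> [/[swap] /ult_notC //|]; case: (ult_em x a). Qed.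

Lemma ult_joinE x a b : val x (a `|` b) <-> val x a \/ val x b.
Proof.
split=> [xab|[] xa]; last 2 first.
- by apply: ult_up xa _; exact: leUl.
- by apply: ult_up xa _; exact: leUr.
apply: contrapT => /not_orP [/ult_complE xNa /ult_complE xNb].
by apply: ult_notC xab _; rewrite complU; exact: ult_meet.
Qed.

Lemma ult_inj x y : val x `<=` val y -> x = y.
Proof.
move=> xy; apply/val_inj/esym; apply: ult_max xy.
by split; [exact: ult_filter | exact: ult_proper].
Qed.

Definition mkUlt F (uF : ultrafilter F) : Ult B := exist _ F (mem_set uF).

Definition filter_between F I A := [/\ is_filter A, F `<=` A & A `<=` (~` I)%classic].

Lemma ex_maximal_filter_between F I : filter_between F I F ->
  exists A, filter_between F I A /\ forall C, A `<` C -> ~ filter_between F I C.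
Proof.
(* [set0] is allowed so that the empty chain has an upper bound. *)
move=> FF; pose P A := A = set0 \/ filter_between F I A.
suff [A [[A0|FA] Amax]] : exists A, P A /\ forall C, A `<` C -> ~ P C.
- exfalso; apply: (Amax F); last by right.
  by rewrite A0; split=> // /(_ \top); case: FF => [[FT _ _] _ _] /(_ FT).
- by exists A; split=> // C ltAC FC; apply: (Amax C ltAC); right.
apply: Zorn_bigcup => Q QP Qtot.
have [[G0 QG0 [a G0a]]|Q0] := pselect (exists2 G, Q G & G !=set0); last first.
  by left; apply/seteqP; split=> // c [G QG Gc]; apply: Q0; exists G => //; exists c.
have goodQ G c : Q G -> G c -> filter_between F I G.
  by move=> /QP [->|//].
have [[G0T _ _] FG0 _] := goodQ _ _ QG0 G0a.
right; split.
- split=> [|c e [G1 QG1 G1c] [G2 QG2 G2e]|c e [G QG Gc] ce].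
  + by exists G0.
  + have [[_ I1 _] _ _] := goodQ _ _ QG1 G1c; have [[_ I2 _] _ _] := goodQ _ _ QG2 G2e.
    case: (Qtot _ _ QG1 QG2) => [G12|G21].
      by exists G2 => //; apply: I2 => //; exact: G12.
    by exists G1 => //; apply: I1 => //; exact: G21.
  + by have [[_ _ U] _ _] := goodQ _ _ QG Gc; exists G => //; exact: U Gc ce.
- by move=> c /FG0; exists G0.
- by move=> c [G QG Gc]; have [_ _] := goodQ _ _ QG Gc; apply.
Qed.

Theorem ult_separation F I : is_filter F -> ideal I -> F `<=` (~` I)%classic ->
  exists x : Ult B, F `<=` val x /\ val x `<=` (~` I)%classic.
Proof.
move=> fF [I0 IU Idown] FI.
have [A [[fA FA AI] Amax]] := ex_maximal_filter_between (And3 fF (@subset_refl _ F) FI).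
have adjoin_meets c : ~ A c -> exists2 f, A f & I (f `&` c).
  move=> Ac; apply: contrapT => noI; apply: (Amax (filter_adjoin A c)).
    split; first exact: sub_filter_adjoin.
    by move=> /(_ c) adjA; apply/Ac/adjA/filter_adjoin_self; case: fA.
  split; [exact: is_filter_adjoin | exact: subset_trans (@sub_filter_adjoin _ c) |].
  by move=> e [f Af fe] Ie; apply: noI; exists f => //; exact: Idown Ie fe.
have Aem a : A a \/ A (~` a).
  apply: contrapT => /not_orP [/adjoin_meets [f1 A1 I1] /adjoin_meets [f2 A2 I2]].
  have [_ AI2 _] := fA; apply: (AI (f1 `&` f2)); first exact: AI2.
  rewrite -[f1 `&` f2]meetx1 -(joinxC a) meetUr; apply: IU.
    by apply: Idown I1 _; apply: leI2 => //; exact: leIl.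
  by apply: Idown I2 _; apply: leI2 => //; exact: leIr.
have uA : ultrafilter A by apply: ultrafilterP => //; split=> // /AI; apply.
by exists (mkUlt uA).
Qed.

Definition ultset a : set (Ult B) := [set x | val x a].

Lemma ultsetU a b : ultset (a `|` b) = (ultset a `|` ultset b)%classic.
Proof. by apply/seteqP; split=> x; rewrite /ultset /= ult_joinE. Qed.

Lemma ultsetI a b : ultset (a `&` b) = (ultset a `&` ultset b)%classic.
Proof. by apply/seteqP; split=> x; rewrite /ultset /= ult_meetE. Qed.

Lemma ultsetC a : ultset (~` a) = (~` ultset a)%classic.
Proof. by apply/seteqP; split=> x; rewrite /ultset /= ult_complE. Qed.

Lemma ultset0 : ultset \bot = set0.
Proof. by apply/seteqP; split=> x //; exact: ult_proper. Qed.

Lemma ultsetT : ultset \top = setT.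
Proof. by apply/seteqP; split=> x // _; exact: ult_top. Qed.

Lemma ultset_subset a b : ultset a `<=` ultset b <-> a <= b.
Proof.
split=> [ab|ab x xa]; last exact: ult_up xa ab.
apply: contrapT => nab.
have [x [ax xb]] := ult_separation (is_filter_upset a) (ideal_downset b)
  (fun c ac cb => nab (le_trans ac cb)).
exact: xb b (ab x (ax a (lexx a))) (lexx b).
Qed.

End Ultrafilters.

Section NbhsLemmas.
Context {T : topologicalType}.

Lemma closed_nbhsC (R : set T) p : closed R -> ~ R p -> nbhs p (~` R).
Proof. by move=> /closed_openC; rewrite openE => /[apply]. Qed.

Lemma nbhsC_closed (R : set T) : (forall p, ~ R p -> nbhs p (~` R)) -> closed R.
Proof. by move=> h; rewrite closedE => p np; apply: contrapT => /h. Qed.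

Lemma open_nbhs_of (A : set T) x : open A -> A x -> nbhs x A.
Proof. by move=> oA Ax; exact: open_nbhs_nbhs. Qed.

End NbhsLemmas.

Section Topology.
Context {X Y : topologicalType}.

Lemma nbhs_pairP (x : X) (y : Y) (Q : set (X * Y)) : nbhs (x, y) Q <->
  exists P1 P2, [/\ nbhs x P1, nbhs y P2 & forall a b, P1 a -> P2 b -> Q (a, b)].
Proof.
split=> [[[P1 P2] [/= h1 h2] PQ]|[P1 [P2 [h1 h2 PQ]]]].
  by exists P1, P2; split=> // a b P1a P2b; exact: (PQ (a, b)).
by exists (P1, P2) => // -[a b] [/= P1a P2b]; exact: PQ.
Qed.

Lemma compact_cover_setU_closed (K O : set X) (C : set (set X)) :
  compact K -> C set0 -> setU_closed C ->
  (forall x, K x -> exists V, [/\ C V, open V, V x & V `<=` O]) ->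
  exists V, [/\ C V, K `<=` V & V `<=` O].
Proof.
(* Near-covering compactness, applied to the family of C-members inside O
   directed by inclusion. *)
move=> cK C0 CU hK.
pose F := [set Q : set (set X) | exists V0, [/\ C V0, V0 `<=` O &
   forall W, C W -> W `<=` O -> V0 `<=` W -> Q W]].
have FF : Filter F.
  apply: Build_Filter.
  - by exists set0; split.
  - move=> P Q [V1 [C1 O1 h1]] [V2 [C2 O2 h2]]; exists (V1 `|` V2).
    split=> [||W CW OW sW]; [exact: CU | by move=> z [/O1|/O2] |].
    by split; [apply: h1 | apply: h2] => // z ?; apply: sW; [left | right].
  - by move=> P Q PQ [V0 [C0' O0 h0]]; exists V0; split=> // W CW OW sW; exact/PQ/h0.
have := (compact_near_coveringP K).1 cK (set X) F (fun W x => W x) FF.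
case=> [x Kx|V0 [C0' O0 h0]]; last by exists V0; split=> //; exact: h0.
have [V [CV oV Vx VO]] := hK x Kx.
exists (V, [set W | V `<=` W]); last by move=> [x' W] [/= Vx' VW]; exact: VW.
by split=> /=; [exact: open_nbhs_of | exists V; split].
Qed.

Lemma rimage_closed (R : set (X * Y)) (K : set X) :
  closed R -> compact K -> closed (rimage R K).
Proof.
move=> cR cK; apply: nbhsC_closed => y nRKy.
have := (compact_near_coveringP K).1 cK Y (nbhs y) (fun i x => ~ R (x, i)) _.
move=> /(_ _) cover; apply: filterS (cover _) => [b nRb [a Ka Rab]|x Kx].
  exact: nRb a Ka Rab.
have /nbhs_pairP [P1 [P2 [h1 h2 P12]]] : nbhs (x, y) (~` R).
  by apply: closed_nbhsC => // Rxy; apply: nRKy; exists x.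
by exists (P1, P2) => [|[a b] [/= P1a P2b]]; [split | exact: P12].
Qed.

Lemma rconv_closed (R : set (X * Y)) : closed R -> closed (rconv R).
Proof. by move=> cR; exact: (preimage_closed (fun p _ => @swap_continuous Y X p) cR). Qed.

End Topology.

Section StoneSpaces.
Context {X : topologicalType}.
Hypothesis sX : stone_space X.

Lemma stone_closed_compact (K : set X) : closed K -> compact K.
Proof. by case: sX => cX _ _ cK; exact: subclosed_compact cK cX (@subsetT _ K). Qed.

Lemma stone_clopen_base (O : set X) x :
  open O -> O x -> exists V, [/\ clopen V, V x & V `<=` O].
Proof.
move=> oO Ox; have [_ _ zX] := sX.
have sep z : (~` O) z -> exists V, [/\ clopen V, open V, V z & V `<=` [set w | w <> x]].
  move=> Oz; have /zX [U [cU Uz Ux]] : z != x by apply/eqP => zx; apply: Oz; rewrite zx.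
  by exists U; split=> //; [case: cU | move=> w Uw wx; apply: Ux; rewrite -wx].
have [W [cW OW Wx]] := compact_cover_setU_closed
  (stone_closed_compact (open_closedC oO)) clopen0 (@clopenU X) sep.
exists (~` W); split=> [||z Wz]; [exact: clopenC | by move/Wx |].
by apply: contrapT => Oz; apply: Wz; apply: OW.
Qed.

Lemma stone_clopen_between (C O : set X) : closed C -> open O -> C `<=` O ->
  exists V, [/\ clopen V, C `<=` V & V `<=` O].
Proof.
move=> cC oO CO; apply: compact_cover_setU_closed (stone_closed_compact cC)
  clopen0 (@clopenU X) _ => x /CO Ox.
by have [V [[oV cV] Vx VO]] := stone_clopen_base oO Ox; exists V.
Qed.

End StoneSpaces.

Lemma clopP {X : topologicalType} (U : Clop X) : clopen (clop_val U).
Proof. by have /asboolP := clop_valP U. Qed.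

Definition mkClop {X : topologicalType} (A : set X) (cA : clopen A) : Clop X :=
  @ClopSet X A (asboolT cA).

Lemma clop_le {X : topologicalType} (U V : Clop X) :
  (U <= V)%O <-> clop_val U `<=` clop_val V.
Proof. by split=> /subsetPset. Qed.

Section StoneSpaceOfAlgebra.
Context {d : Order.disp_t} (B : ctbDistrLatticeType d).
Local Open Scope order_scope.
Implicit Types (a b : B) (x : Ult B).

Lemma ultset_open a : open (ultset a).
Proof.
exists [set ultset a]; last exact: bigcup_set1.
by move=> _ ->; apply: finI_from1; exists a.
Qed.

Lemma ultset_clopen a : clopen (ultset a).
Proof. by split; [|rewrite -openC -ultsetC]; exact: ultset_open. Qed.

Lemma ultset_nbhs a x : val x a -> nbhs x (ultset a).
Proof. exact/open_nbhs_of/ultset_open. Qed.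

Lemma ult_open_nbhs (U : set (Ult B)) x :
  open U -> U x -> exists2 a, val x a & ultset a `<=` U.
Proof.
case=> D sD <- [A DA Ax].
have : finI_from (@ult_basic d B) id A := sD _ DA.
rewrite filterI_iter_finI => -[n _ An].
suff [a xa aA] : exists2 a, val x a & ultset a `<=` A.
  by exists a => // y /aA Ay; exists A.
elim: n {D sD DA} A An Ax => [|n IH] A /=.
  case=> [-> _|[_ [a _ <-] <-] xa]; last by exists a.
  by exists \top; [exact: ult_top |].
case=> P nP [Q nQ <-] [Px Qx].
have [a xa aP] := IH _ nP Px; have [b xb bQ] := IH _ nQ Qx.
exists (a `&` b); first exact: ult_meet.
by rewrite ultsetI => y [/aP ? /bQ ?].
Qed.

Lemma ult_nbhsP (P : set (Ult B)) x : nbhs x P -> exists2 a, val x a & ultset a `<=` P.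
Proof.
rewrite nbhsE => -[O [oO Ox] OP]; have [a xa aO] := ult_open_nbhs oO Ox.
by exists a => // y /aO /OP.
Qed.

Lemma ult_compact : compact [set: Ult B].
Proof.
move=> F PF _; pose G := [set a : B | F (ultset a)].
have fG : is_filter G.
  split=> [|a b Fa Fb|a b Fa ab]; rewrite /G /=.
  - by rewrite ultsetT; exact: filterT.
  - by rewrite ultsetI; exact: filterI.
  - by apply: filterS Fa; apply/ultset_subset.
have G0 : G `<=` ~` [set a | a <= \bot].
  move=> a Fa a0; apply: (@filter_not_empty _ F PF).
  suff <- : ultset a = set0 by [].
  by apply/seteqP; split=> // y ya; exact/ult_proper/(ult_up ya).
have [x [Gx _]] := ult_separation fG (ideal_downset \bot) G0.
exists x; split=> // Q P FQ /ult_nbhsP [a xa aP]; apply: contrapT => QP0.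
have : G (~` a).
  rewrite /G /= ultsetC; apply: filterS FQ => y Qy ay.
  by apply: QP0; exists y; split=> //; exact: aP.
by move/Gx/ult_complE.
Qed.

Lemma ult_stone : stone_space (Ult B).
Proof.
have sep x y : x != y -> exists2 a, val x a & ~ val y a.
  move=> /eqP xy; apply: contrapT => nsep; apply: xy; apply: ult_inj => a xa.
  by apply: contrapT => ya; apply: nsep; exists a.
split=> [|x y cxy|x y /sep [a xa ya]]; first exact: ult_compact.
  apply: contrapT => /eqP /sep [a xa /ult_complE yNa].
  have [z [za zNa]] := cxy _ _ (ultset_nbhs xa) (ultset_nbhs yNa).
  exact: ult_notC za zNa.
by exists (ultset a); split=> //; exact: ultset_clopen.
Qed.

Lemma clopen_ultset (U : set (Ult B)) : clopen U -> exists b, U = ultset b.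
Proof.
move=> [oU cU]; pose C := [set V | exists b, V = ultset b].
have C0 : C set0 by exists \bot; rewrite ultset0.
have CU : setU_closed C by move=> _ _ [a ->] [b ->]; exists (a `|` b); rewrite ultsetU.
have nbhsU x : U x -> exists V, [/\ C V, open V, V x & V `<=` U].
  move=> /(ult_open_nbhs oU) [a xa aU].
  by exists (ultset a); split=> //; [exists a | exact: ultset_open].
have [_ [[b ->] Ub bU]] :=
  compact_cover_setU_closed (stone_closed_compact ult_stone cU) C0 CU nbhsU.
by exists b; apply/seteqP; split.
Qed.

Definition clop_ultset b : Clop (Ult B) := mkClop (ultset_clopen b).

Lemma clop_ultset_surj (U : Clop (Ult B)) : exists b, U = clop_ultset b.
Proof. by have [b eb] := clopen_ultset (clopP U); exists b; exact: val_inj. Qed.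

Lemma clop_ultset0 : clop_ultset \bot = \bot.
Proof. by apply: val_inj; rewrite /= ultset0. Qed.

Lemma clop_ultsetT : clop_ultset \top = \top.
Proof. by apply: val_inj; rewrite /= ultsetT. Qed.

Lemma clop_ultsetU : {morph clop_ultset : a b / a `|` b}.
Proof. by move=> a b; apply: val_inj; rewrite /= ultsetU. Qed.

Lemma clop_ultsetI : {morph clop_ultset : a b / a `&` b}.
Proof. by move=> a b; apply: val_inj; rewrite /= ultsetI. Qed.

Lemma clop_ultset_le a b : clop_ultset a <= clop_ultset b <-> a <= b.
Proof. by rewrite clop_le; exact: ultset_subset. Qed.

End StoneSpaceOfAlgebra.

Section SubordinationFilters.
Context {dA dB : Order.disp_t} {A : ctbDistrLatticeType dA} {B : ctbDistrLatticeType dB}.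
Local Open Scope order_scope.
Variable T : A -> B -> Prop.
Hypothesis sT : subordination T.

Lemma subordinationWl a a' b : a <= a' -> T a' b -> T a b.
Proof. by case: sT => _ _ _ S4 aa' Tab; exact: S4 aa' Tab (lexx b). Qed.

Lemma subordinationWr a b b' : T a b -> b <= b' -> T a b'.
Proof. by case: sT => _ _ _ S4; exact: S4 (lexx a). Qed.

Lemma subordination_row_filter a : is_filter (T a).
Proof.
case: sT => [[_ T11] _ TI _]; split=> [|b c|b c /subordinationWr]; last by apply.
  by apply: subordinationWl T11; exact: lex1.
exact: TI.
Qed.

Lemma subordination_image_filter (F : set A) :
  is_filter F -> is_filter [set b | exists2 a, F a & T a b].
Proof.
case: sT => [[_ T11] _ TI _] [FT FI _].
split=> [|b1 b2 [a1 F1 T1] [a2 F2 T2]|b1 b2 [a Fa Tab] bb].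
- by exists \top.
- exists (a1 `&` a2); first exact: FI.
  by apply: TI; apply: subordinationWl; [exact: leIl | exact: T1 | exact: leIr | exact: T2].
- by exists a => //; exact: subordinationWr bb.
Qed.

Lemma subordination_preimage_ideal (I : set B) :
  ideal I -> ideal [set a | exists2 b, I b & T a b].
Proof.
case: sT => [[T00 _] TU _ _] [I0 IU Idown].
split=> [|a1 a2 [b1 I1 T1] [b2 I2 T2]|a1 a2 [b Ib Tb] aa].
- by exists \bot.
- exists (b1 `|` b2); first exact: IU.
  by apply: TU; apply: subordinationWr; [exact: T1 | exact: leUl | exact: T2 | exact: leUr].
- by exists b => //; exact: subordinationWl aa Tb.
Qed.

End SubordinationFilters.

Lemma ult_compl_ideal {d : Order.disp_t} {B : ctbDistrLatticeType d} (x : Ult B) :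
  ideal (~` val x).
Proof.
split=> [|a b xa xb /ult_joinE []//|a b xb ab xa]; first exact: ult_proper.
exact/xb/(ult_up xa).
Qed.

Definition ult_continuous {X : topologicalType} {d : Order.disp_t}
  {B : ctbDistrLatticeType d} (f : X -> Ult B) := forall b, open [set x | val (f x) b].

Section RelationsOfSubordinations.
Context {dA dB : Order.disp_t} {A : ctbDistrLatticeType dA} {B : ctbDistrLatticeType dB}.
Local Open Scope order_scope.
Implicit Types (T : A -> B -> Prop) (a : A) (b : B).

Lemma RS_closed_along {X Y : topologicalType} (f : X -> Ult A) (g : Y -> Ult B) T :
  ult_continuous f -> ult_continuous g -> closed [set p | RS T (f p.1, g p.2)].
Proof.
move=> cf cg; apply: nbhsC_closed => -[x y] /= nR.
have [b [[a xa Tab] yb]] : exists b, (exists2 a, val (f x) a & T a b) /\ ~ val (g y) b.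
  apply: contrapT => nex; apply: nR => b Tb.
  by apply: contrapT => yb; apply: nex; exists b.
apply/nbhs_pairP; exists [set x' | val (f x') a], [set y' | val (g y') (~` b)]; split.
- exact: open_nbhs_of.
- by apply: open_nbhs_of (cg _) _; apply/ult_complE.
- by move=> x' y' x'a y'b R'; apply: ult_notC y'b; apply: R'; exists a.
Qed.

Lemma RS_closed T : closed (RS T).
Proof.
have -> : RS T = [set p | RS T (id p.1, id p.2)] by apply/seteqP; split=> -[].
by apply: (RS_closed_along (f := id) (g := id)) => c; exact: ultset_open.
Qed.

Lemma RS_lift T (F : set A) (y : Ult B) : subordination T -> is_filter F ->
  (forall a b, F a -> T a b -> val y b) -> exists x, F `<=` val x /\ RS T (x, y).
Proof.
move=> sT fF Fy.
have FJ : F `<=` (~` [set a | exists2 b, ~ val y b & T a b])%classic.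
  by move=> a Fa [b yb Tab]; exact/yb/(Fy _ _ Fa).
have [x [Fx xJ]] := ult_separation fF
  (subordination_preimage_ideal sT (ult_compl_ideal y)) FJ.
exists x; split=> // b [a xa Tab]; apply: contrapT => yb.
by apply: (xJ a xa); exists b.
Qed.

Lemma SR_RS_clop_ultset T a b : subordination T ->
  SR (RS T) (clop_ultset a) (clop_ultset b) <-> T a b.
Proof.
move=> sT; split=> [RSab|Tab y [x xa]]; last by apply; exists a.
apply: contrapT => nTab.
have [y [Tay yb]] := ult_separation (subordination_row_filter sT a) (ideal_downset b)
  (fun c Tac cb => nTab (subordinationWr sT Tac cb)).
have [x [ax Rxy]] := RS_lift (y := y) sT (is_filter_upset a)
  (fun c e ac Tce => Tay _ (subordinationWl sT ac Tce)).
apply: (yb b) (lexx b); apply: RSab.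
by exists x; [exact: ax (lexx a) | exact: Rxy].
Qed.

End RelationsOfSubordinations.

Lemma RS_S5 {d : Order.disp_t} {A : ctbDistrLatticeType d} (S : A -> A -> Prop) :
  S5_subordination S -> closed_equiv (RS S).
Proof.
move=> [sS S5 S6 S7]; split=> [|x|x y Rxy|x y z Rxy Ryz]; first exact: RS_closed.
- by move=> b [a xa Sab]; exact: ult_up xa (S5 _ _ Sab).
- move=> b [a ya Sab]; apply: contrapT => /ult_complE xNb.
  by apply: (ult_notC ya); apply: Rxy; exists (~` b)%O => //; exact: S6.
- move=> b [a xa /S7 [c [Sac Scb]]].
  by apply: Ryz; exists c => //; apply: Rxy; exists a.
Qed.

Lemma RS_rcomp {dA dB dC : Order.disp_t} {A : ctbDistrLatticeType dA}
  {B : ctbDistrLatticeType dB} {C : ctbDistrLatticeType dC}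
  (T : A -> B -> Prop) (T' : B -> C -> Prop) :
  subordination T -> subordination T' -> RS (bcomp T T') = rcomp (RS T) (RS T').
Proof.
move=> sT sT'; apply/seteqP; split=> -[x z] /=; last first.
  case=> y [/= Rxy Ryz] c [a xa [b [Tab T'bc]]].
  by apply: Ryz; exists b => //; apply: Rxy; exists a.
move=> Rxz; have Fz b c : (exists2 a, val x a & T a b) -> T' b c -> val z c.
  by move=> [a xa Tab] T'bc; apply: Rxz; exists a => //; exists b.
have [y [Rxy Ryz]] := RS_lift sT' (subordination_image_filter sT (ult_filter x)) Fz.
by exists y.
Qed.

Lemma RS_compat {dA dB : Order.disp_t} {A : ctbDistrLatticeType dA} {B : ctbDistrLatticeType dB}
  (S : A -> A -> Prop) (S' : B -> B -> Prop) (T : A -> B -> Prop) :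
  S5_subordination S -> S5_subordination S' -> compat_sub S S' T ->
  compat_closed_rel (RS S) (RS S') (RS T).
Proof.
move=> [sS _ _ _] [sS' _ _ _] [sT TS S'T].
by split; [exact: RS_closed | rewrite -RS_rcomp // TS | rewrite -RS_rcomp // S'T].
Qed.

Lemma rimage_rcomp {X Y Z : Type} (R : set (X * Y)) (R' : set (Y * Z)) U :
  rimage (rcomp R R') U = rimage R' (rimage R U).
Proof.
apply/seteqP; split=> [z [x Ux [y [/= Rxy Ryz]]]|z [y [x Ux Rxy] Ryz]].
  by exists y => //; exists x.
by exists x => //; exists y.
Qed.

Lemma rimage_subset {X Y : Type} (R : set (X * Y)) U U' :
  U `<=` U' -> rimage R U `<=` rimage R U'.
Proof. by move=> UU' y [x /UU' U'x Rxy]; exists x. Qed.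

Lemma clop_valC {X : topologicalType} (U : Clop X) :
  clop_val (~` U)%O = ~` clop_val U.
Proof. by []. Qed.

Lemma clop_valI {X : topologicalType} (U V : Clop X) :
  clop_val (U `&` V)%O = clop_val U `&` clop_val V.
Proof. by []. Qed.

Lemma brel_ext {A B : Type} (T T' : A -> B -> Prop) :
  (forall a b, T a b <-> T' a b) -> T = T'.
Proof. by move=> TT'; apply/funext => a; apply/funext => b; apply/propext. Qed.

Lemma stone_clopen_nbhs {X : topologicalType} (P : set X) x :
  stone_space X -> nbhs x P -> exists V, [/\ clopen V, V x & V `<=` P].
Proof.
move=> sX; rewrite nbhsE => -[O [oO Ox] OP].
by have [V [cV Vx VO]] := stone_clopen_base sX oO Ox; exists V; split=> // z /VO /OP.
Qed.

Section SubordinationOfRelation.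
Context {X Y : topologicalType}.
Implicit Types (R : set (X * Y)).

Lemma SR_subordination R : subordination (SR R).
Proof.
split=> [|U V W UW VW y [x [Ux|Vx] Rxy]|U V W UV UW y Ry|U U' V V'].
- by split=> // y [x].
- by apply: UW; exists x.
- by apply: VW; exists x.
- by split; [exact: UV | exact: UW].
- move=> /clop_le UU' U'V /clop_le VV' y [x Ux Rxy].
  by apply/VV'/U'V; exists x => //; exact: UU'.
Qed.

Lemma SR_antitone R1 R2 : R1 `<=` R2 -> brel_sub (SR R2) (SR R1).
Proof. by move=> R12 U V R2UV y [x Ux R1xy]; apply: R2UV; exists x => //; exact: R12. Qed.

Lemma SR_rconv R : SR (rconv R) = bdag (SR R).
Proof.
apply: brel_ext => V U; rewrite /bdag /SR !clop_valC.
split=> [RVU y [x Ux Rxy] Vy|RNUNV x [y Vy Rxy]].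
  by apply: Ux; apply: RVU; exists y.
by apply: contrapT => Ux; apply: (RNUNV y) => //; exists x.
Qed.

Lemma SR_separation R x y : stone_space X -> stone_space Y -> closed R -> ~ R (x, y) ->
  exists (U : Clop X) (V : Clop Y), [/\ clop_val U x, ~ clop_val V y & SR R U V].
Proof.
move=> sX sY cR /(closed_nbhsC cR) /nbhs_pairP [P1 [P2 [P1x P2y P12]]].
have [U [cU Ux UP1]] := stone_clopen_nbhs sX P1x.
have [V [cV Vy VP2]] := stone_clopen_nbhs sY P2y.
exists (mkClop cU), (mkClop (clopenC set0 cV)); split=> //= b [a Ua Rab] Vb.
exact: P12 (UP1 _ Ua) (VP2 _ Vb) Rab.
Qed.

End SubordinationOfRelation.

Lemma clopen_interpolation {X Y Z : topologicalType}
    (R : set (X * Y)) (R' : set (Y * Z)) (U : Clop X) (W : Clop Z) :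
  stone_space X -> stone_space Y -> stone_space Z -> closed R -> closed R' ->
  rimage R' (rimage R (clop_val U)) `<=` clop_val W ->
  exists V : Clop Y, rimage R (clop_val U) `<=` clop_val V /\
    rimage R' (clop_val V) `<=` clop_val W.
Proof.
move=> sX sY sZ cR cR' RRUW.
have [[_ cU] [oW _]] := (clopP U, clopP W).
have cRU := rimage_closed cR (stone_closed_compact sX cU).
have cRW := rimage_closed (rconv_closed cR') (stone_closed_compact sZ (open_closedC oW)).
have RU_RW : rimage R (clop_val U) `<=` ~` rimage (rconv R') (~` clop_val W).
  by move=> y RUy [z Wz R'yz]; apply/Wz/RRUW; exists y.
have [V [cV RUV VRW]] := stone_clopen_between sY cRU (closed_openC cRW) RU_RW.
exists (mkClop cV); split=> // z [y Vy R'yz].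
by apply: contrapT => Wz; apply: VRW Vy _; exists z.
Qed.

Lemma SR_rcomp {X Y Z : topologicalType} (R : set (X * Y)) (R' : set (Y * Z)) :
  stone_space X -> stone_space Y -> stone_space Z -> closed R -> closed R' ->
  SR (rcomp R R') = bcomp (SR R) (SR R').
Proof.
move=> sX sY sZ cR cR'; apply: brel_ext => U W; rewrite /SR rimage_rcomp.
split=> [/(clopen_interpolation sX sY sZ cR cR') [V]|[V [RUV R'VW]]]; first by exists V.
by apply: subset_trans R'VW; exact: rimage_subset.
Qed.

Lemma SR_S5 {X : topologicalType} (E : set (X * X)) :
  stone_space X -> closed_equiv E -> S5_subordination (SR E).
Proof.
move=> sX [cE Er Es Et]; split=> [|U V EUV|U V EUV|U W EUW].
- exact: SR_subordination.
- by apply/clop_le => x Ux; apply: EUV; exists x.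
- rewrite /SR !clop_valC => x [y Vy Eyx] Ux; apply: Vy; apply: EUV; exists x => //; exact: Es.
- have EEUW : rimage E (rimage E (clop_val U)) `<=` clop_val W.
    by move=> z [y [x Ux Exy] Eyz]; apply: EUW; exists x => //; exact: Et Eyz.
  by have [V [EUV EVW]] := clopen_interpolation sX sX sX cE cE EEUW; exists V.
Qed.

Lemma SR_compat {X Y : topologicalType} (E : set (X * X)) (E' : set (Y * Y))
  (R : set (X * Y)) : stone_space X -> stone_space Y -> closed_equiv E ->
  closed_equiv E' -> compat_closed_rel E E' R -> compat_sub (SR E) (SR E') (SR R).
Proof.
move=> sX sY [cE _ _ _] [cE' _ _ _] [cR ER RE'].
by split; [exact: SR_subordination | rewrite -SR_rcomp // ER | rewrite -SR_rcomp // RE'].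
Qed.

Section ClopenPoints.
Context {X : topologicalType}.
Local Open Scope order_scope.

Lemma clop_pt_ultrafilter (x : X) : ultrafilter [set U : Clop X | clop_val U x].
Proof.
apply: ultrafilterP => [|U]; last by case: (pselect (clop_val U x)); [left | right].
by split=> //; split=> //= U V Ux /clop_le; apply.
Qed.

Definition clop_pt (x : X) : Ult (Clop X) := mkUlt (clop_pt_ultrafilter x).

Lemma clop_pt_continuous : ult_continuous clop_pt.
Proof. by move=> U; case: (clopP U). Qed.

Hypothesis sX : stone_space X.

Lemma clop_filter_point (F : set (Clop X)) (W : Clop X) : is_filter F -> ~ F W ->
  exists y, ~ clop_val W y /\ forall V, F V -> clop_val V y.
Proof.
move=> [FT FI Fup] FW; apply: contrapT => noy.
pose C := [set A | exists V, F V /\ A = (~` clop_val V)%classic].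
have C0 : C set0.
  by exists \top; split=> //; apply/seteqP; split=> // y /(_ I).
have CU : setU_closed C.
  move=> _ _ [V1 [F1 ->]] [V2 [F2 ->]]; exists (V1 `&` V2).
  by rewrite clop_valI setCI; split=> //; exact: FI.
have nbhsW y : (~` clop_val W)%classic y ->
    exists A, [/\ C A, open A, A y & A `<=` setT].
  move=> Wy; have /existsNP [V /not_implyP [FV Vy]] : ~ forall V, F V -> clop_val V y.
    by move=> Fy; apply: noy; exists y.
  by exists (~` clop_val V)%classic; split=> //; [exists V | case: (clopP V) => _ /closed_openC].
have [_ [[V [FV ->]] WV _]] := compact_cover_setU_closed
  (stone_closed_compact sX (open_closedC (proj1 (clopP W)))) C0 CU nbhsW.
apply/FW/(Fup _ _ FV)/clop_le => y Vy; apply: contrapT => Wy.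
exact: WV Wy Vy.
Qed.

Lemma clop_ideal_point (J : set (Clop X)) (U : Clop X) : ideal J -> ~ J U ->
  exists x, clop_val U x /\ forall V, J V -> ~ clop_val V x.
Proof.
move=> [J0 Jjoin Jdown] JNU.
have fF : is_filter [set V | J (~` V)].
  split=> /= [|V W JV JW|V W JV VW]; first by rewrite compl1.
    by rewrite complI; exact: Jjoin.
  by apply: Jdown JV _; rewrite leC.
have FU : ~ [set V | J (~` V)] (~` U) by rewrite /= complK.
have [x [Ux Jx]] := clop_filter_point fF FU.
exists x; split=> [|V JV]; first by apply: contrapT => nUx; apply: Ux.
by apply: (Jx (~` V)); rewrite /= complK.
Qed.

Lemma clop_pt_surj (u : Ult (Clop X)) : exists x, u = clop_pt x.
Proof.
have [x [_ ux]] := clop_filter_point (ult_filter u) (@ult_proper _ _ u).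
by exists x; apply: ult_inj => V /ux.
Qed.

End ClopenPoints.

Definition RSpt {X Y : topologicalType} (N : Clop X -> Clop Y -> Prop) : set (X * Y) :=
  [set p | RS N (clop_pt p.1, clop_pt p.2)].

Section PointRelations.
Context {X Y : topologicalType}.
Hypotheses (sX : stone_space X) (sY : stone_space Y).
Implicit Types (N : Clop X -> Clop Y -> Prop) (R : set (X * Y)).

Lemma RSpt_closed N : closed (RSpt N).
Proof. exact: RS_closed_along clop_pt_continuous clop_pt_continuous. Qed.

Lemma RSpt_subset N R : closed R -> brel_sub (SR R) N -> RSpt N `<=` R.
Proof.
move=> cR RN [x y] Nxy; apply: contrapT => /(SR_separation sX sY cR) [U [V [Ux Vy RUV]]].
by apply: Vy; apply: Nxy; exists U => //; exact: RN.
Qed.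

Lemma RS_SR_clop_pt R x y : closed R -> RS (SR R) (clop_pt x, clop_pt y) <-> R (x, y).
Proof.
move=> cR; split=> [RSxy|Rxy V [U Ux RUV]].
  exact: (@RSpt_subset (SR R) R cR (fun _ _ => id) (x, y) RSxy).
by apply: RUV; exists x.
Qed.

Lemma SR_RSpt N : subordination N -> SR (RSpt N) = N.
Proof.
move=> sN; apply: brel_ext => U W; split=> [RUW|NUW y [x Ux Nxy]]; last first.
  by apply: Nxy; exists U.
apply: contrapT => NUW.
(* A point y outside W lying in every N-successor of U, and a point x of U
   whose R_N-successors include y, put y in R_N[U] outside W. *)
have [y [Wy Uy]] := clop_filter_point sY (subordination_row_filter sN U) NUW.
have [x [Ux Jx]] : exists x, clop_val U x /\
    forall U', (exists2 V, ~ clop_val V y & N U' V) -> ~ clop_val U' x.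
  apply: (clop_ideal_point sX (subordination_preimage_ideal sN (ult_compl_ideal (clop_pt y)))).
  by move=> [V Vy NUV]; exact/Vy/Uy.
apply/Wy/RUW; exists x => // V [U' U'x NU'V].
by apply: contrapT => Vy; apply: Jx U'x; exists V.
Qed.

Lemma RSpt_compat (E : set (X * X)) (E' : set (Y * Y)) N :
  closed_equiv E -> closed_equiv E' -> compat_sub (SR E) (SR E') N ->
  compat_closed_rel E E' (RSpt N).
Proof.
move=> [_ Er _ _] [_ Er' _ _] [_ EN NE']; split; first exact: RSpt_closed.
- apply/seteqP; split=> [[x y] [x' [/= Exx' Nx'y]] V [U Ux NUV]|[x y] Nxy].
    rewrite -EN in NUV; case: NUV => W [EUW NWV].
    by apply: Nx'y; exists W => //; apply: EUW; exists x.
  by exists x; split=> //; exact: Er.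
- apply/seteqP; split=> [[x y] [y' [/= Nxy' E'y'y]] V [U Ux NUV]|[x y] Nxy].
    rewrite -NE' in NUV; case: NUV => W [NUW E'WV].
    by apply: E'WV; exists y' => //; apply: Nxy'; exists U.
  by exists y; split=> //; exact: Er'.
Qed.

Lemma SR_meet (E : set (X * X)) (E' : set (Y * Y)) (R1 R2 M : set (X * Y)) :
  closed_equiv E -> closed_equiv E' ->
  compat_closed_rel E E' R1 -> compat_closed_rel E E' R2 -> is_meet_ccr E E' R1 R2 M ->
  is_meet_csub (SR E) (SR E') (SR R1) (SR R2) (SR M).
Proof.
move=> hE hE' [cR1 _ _] [cR2 _ _] [cM M1 M2 Mmax].
split=> [|||N cN N1 N2]; [exact: SR_compat | exact: SR_antitone | exact: SR_antitone |].
have := SR_antitone (Mmax _ (RSpt_compat hE hE' cN)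
  (RSpt_subset cR1 N1) (RSpt_subset cR2 N2)).
by case: cN => sN _ _; rewrite SR_RSpt.
Qed.

End PointRelations.

Definition stone_unit {X : topologicalType} (E : set (X * X)) : set (X * Ult (Clop X)) :=
  [set p | RS (SR E) (clop_pt p.1, p.2)].

Definition stone_unit_inv {X : topologicalType} (E : set (X * X)) :
  set (Ult (Clop X) * X) := [set p | RS (SR E) (p.1, clop_pt p.2)].

Section StoneUnit.
Context {X : topologicalType} (E : set (X * X)).
Hypotheses (sX : stone_space X) (hE : closed_equiv E).

Lemma RS_SR_clop_ptE x y : RS (SR E) (clop_pt x, clop_pt y) <-> E (x, y).
Proof. by case: hE => cE _ _ _; exact: RS_SR_clop_pt. Qed.

Lemma stone_unit_compat : compat_closed_rel E (RS (SR E)) (stone_unit E).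
Proof.
have [_ Er _ Et] := hE; have [_ RSr _ _] := RS_S5 (SR_S5 sX hE).
split; first exact: (RS_closed_along (g := id) clop_pt_continuous (@ultset_open _ _)).
- apply/seteqP; split=> [[x u] [x' [/= Exx']]|[x u] xu]; last by exists x; split=> //=.
  by have [z ->] := clop_pt_surj sX u; rewrite /stone_unit /= !RS_SR_clop_ptE; exact: Et.
- apply/seteqP; split=> [[x u] [u' [/=]]|[x u] xu]; last by exists u; split=> //=.
  have [y ->] := clop_pt_surj sX u'; have [z ->] := clop_pt_surj sX u.
  by rewrite /stone_unit /= !RS_SR_clop_ptE; exact: Et.
Qed.

Lemma stone_unit_inv_compat : compat_closed_rel (RS (SR E)) E (stone_unit_inv E).
Proof.
have [_ Er _ Et] := hE; have [_ RSr _ _] := RS_S5 (SR_S5 sX hE).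
split; first exact: (RS_closed_along (f := id) (@ultset_open _ _) clop_pt_continuous).
- apply/seteqP; split=> [[u x] [u' [/=]]|[u x] ux]; last by exists u; split=> //=.
  have [y ->] := clop_pt_surj sX u; have [z ->] := clop_pt_surj sX u'.
  by rewrite /stone_unit_inv /= !RS_SR_clop_ptE; exact: Et.
- apply/seteqP; split=> [[u x] [x' [/=]]|[u x] ux]; last by exists x; split=> //=.
  by have [y ->] := clop_pt_surj sX u; rewrite /stone_unit_inv /= !RS_SR_clop_ptE; exact: Et.
Qed.

Lemma stone_unit_iso :
  [/\ compat_closed_rel E (RS (SR E)) (stone_unit E),
      compat_closed_rel (RS (SR E)) E (stone_unit_inv E),
      rcomp (stone_unit E) (stone_unit_inv E) = E &
      rcomp (stone_unit_inv E) (stone_unit E) = RS (SR E)].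
Proof.
have [_ Er _ Et] := hE.
split; [exact: stone_unit_compat | exact: stone_unit_inv_compat | |].
- apply/seteqP; split=> [[x x'] [u [/=]]|[x x'] Exx'].
    have [y ->] := clop_pt_surj sX u.
    by rewrite /stone_unit /stone_unit_inv /= !RS_SR_clop_ptE; exact: Et.
  by exists (clop_pt x'); rewrite /stone_unit /stone_unit_inv /= !RS_SR_clop_ptE.
- apply/seteqP; split=> [[u u'] [x [/=]]|[u u']];
    have [y ->] := clop_pt_surj sX u; have [y' ->] := clop_pt_surj sX u'.
    by rewrite /stone_unit /stone_unit_inv /= !RS_SR_clop_ptE => /Et; apply.
  rewrite RS_SR_clop_ptE => Eyy'.
  by exists y; rewrite /stone_unit /stone_unit_inv /= !RS_SR_clop_ptE.
Qed.

End StoneUnit.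

Lemma stone_unit_natural {X Y : topologicalType} (E : set (X * X)) (E' : set (Y * Y))
  (R : set (X * Y)) : stone_space X -> stone_space Y -> closed_equiv E ->
  closed_equiv E' -> compat_closed_rel E E' R ->
  rcomp (stone_unit E) (RS (SR R)) = rcomp R (stone_unit E').
Proof.
move=> sX sY [cE Er _ _] [cE' Er' _ _] [cR ER RE'].
have ptE x y := RS_SR_clop_pt sX sX x y cE.
have ptE' x y := RS_SR_clop_pt sY sY x y cE'.
have ptR x y := RS_SR_clop_pt sX sY x y cR.
apply/seteqP; split=> [[x v] [u [/=]]|[x v] [y [/= Rxy]]];
  have [z ->] := clop_pt_surj sY v.
- have [y ->] := clop_pt_surj sX u; rewrite /stone_unit /= ptE ptR => Exy Ryz.
  exists z; split; last by rewrite /stone_unit /= ptE'.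
  by rewrite -ER; exists y.
- rewrite /stone_unit /= ptE' => E'yz.
  exists (clop_pt x); split; rewrite /stone_unit /= ?ptE ?ptR //.
  by rewrite -RE'; exists y.
Qed.

Section Comap.
Context {dA dB dC : Order.disp_t} {A : ctbDistrLatticeType dA}
  {B : ctbDistrLatticeType dB} {C : ctbDistrLatticeType dC}.
Local Open Scope order_scope.
Variable T : A -> B -> Prop.
Hypothesis sT : subordination T.

Lemma subordination_comapl (f : C -> A) : f \bot = \bot -> f \top = \top ->
  {morph f : a b / a `|` b} -> {homo f : a b / a <= b} ->
  subordination (fun c b => T (f c) b).
Proof.
case: sT => [[T00 T11] TU TI TS] f0 f1 fU fle.
split=> [|c c' b Tcb Tc'b|c b b'|c c' b b' cc'] /=; first by rewrite f0 f1.
- by rewrite fU; exact: TU.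
- exact: TI.
- exact/TS/fle.
Qed.

Lemma subordination_comapr (f : C -> B) : f \bot = \bot -> f \top = \top ->
  {morph f : a b / a `&` b} -> {homo f : a b / a <= b} ->
  subordination (fun a c => T a (f c)).
Proof.
case: sT => [[T00 T11] TU TI TS] f0 f1 fI fle.
split=> [|a a' c|a c c' Tac Tac'|a a' c c' aa' Ta'c /fle] /=; first by rewrite f0 f1.
- exact: TU.
- by rewrite fI; exact: TI.
- exact: TS aa' Ta'c.
Qed.

End Comap.

Lemma S5_bcomp {d : Order.disp_t} {B : ctbDistrLatticeType d} (S : B -> B -> Prop) :
  S5_subordination S -> bcomp S S = S.
Proof.
move=> [sS S5 _ S7]; apply: brel_ext => a c; split=> [[b [Sab Sbc]]|/S7 //].
exact: (subordinationWl sS (S5 _ _ Sab) Sbc).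
Qed.

Definition alg_counit {d : Order.disp_t} {B : ctbDistrLatticeType d}
  (S : B -> B -> Prop) : Clop (Ult B) -> B -> Prop :=
  fun U b => SR (RS S) U (clop_ultset b).

Definition alg_counit_inv {d : Order.disp_t} {B : ctbDistrLatticeType d}
  (S : B -> B -> Prop) : B -> Clop (Ult B) -> Prop :=
  fun b U => SR (RS S) (clop_ultset b) U.

Section CounitComposites.
Context {dA dB dC : Order.disp_t} {A : ctbDistrLatticeType dA}
  {B : ctbDistrLatticeType dB} {C : ctbDistrLatticeType dC}.

Lemma bcomp_SR_RS_clop_ultset (T : A -> B -> Prop) (T' : B -> C -> Prop) a c :
  subordination T -> subordination T' ->
  bcomp (SR (RS T)) (SR (RS T')) (clop_ultset a) (clop_ultset c) <-> bcomp T T' a c.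
Proof.
move=> sT sT'; split=> [[V [TaV T'Vc]]|[b [Tab T'bc]]].
  have [b eV] := clop_ultset_surj V; rewrite eV in TaV T'Vc.
  by exists b; split; [exact/(SR_RS_clop_ultset _ _ sT) | exact/(SR_RS_clop_ultset _ _ sT')].
by exists (clop_ultset b); split; apply/SR_RS_clop_ultset.
Qed.

Lemma bcomp_alg_counitl (S : B -> B -> Prop) (T : B -> C -> Prop) a c :
  subordination S -> bcomp (alg_counit S) T (clop_ultset a) c <-> bcomp S T a c.
Proof.
move=> sS; split=> -[b [Sab Tbc]]; exists b; split=> //.
  exact/(SR_RS_clop_ultset _ _ sS).
exact/(SR_RS_clop_ultset _ _ sS).
Qed.

Lemma bcomp_alg_counit_invr (T : A -> B -> Prop) (S : B -> B -> Prop) a c :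
  subordination S -> bcomp T (alg_counit_inv S) a (clop_ultset c) <-> bcomp T S a c.
Proof.
move=> sS; split=> -[b [Tab Sbc]]; exists b; split=> //.
  exact/(SR_RS_clop_ultset _ _ sS).
exact/(SR_RS_clop_ultset _ _ sS).
Qed.

End CounitComposites.

Section AlgebraCounit.
Context {d : Order.disp_t} {B : ctbDistrLatticeType d} (S : B -> B -> Prop).
Hypothesis hS : S5_subordination S.
Local Notation SR' := (SR (RS S)).

Let sS : subordination S. Proof. by case: hS. Qed.

Lemma SR_RS_S5 : S5_subordination SR'.
Proof. exact: SR_S5 (ult_stone B) (RS_S5 hS). Qed.

Lemma alg_counit_compat : compat_sub SR' S (alg_counit S).
Proof.
split.
- apply: (subordination_comapr (SR_subordination _)) => [||a b|a b ab].
  + exact: clop_ultset0.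
  + exact: clop_ultsetT.
  + exact: clop_ultsetI.
  + exact/clop_ultset_le.
- apply: brel_ext => U b.
  change (bcomp SR' SR' U (clop_ultset b) <-> SR' U (clop_ultset b)).
  by rewrite (S5_bcomp SR_RS_S5).
- apply: brel_ext => U b; have [a ->] := clop_ultset_surj U.
  by rewrite bcomp_alg_counitl // (S5_bcomp hS) /alg_counit SR_RS_clop_ultset.
Qed.

Lemma alg_counit_inv_compat : compat_sub S SR' (alg_counit_inv S).
Proof.
split.
- apply: (subordination_comapl (SR_subordination _)) => [||a b|a b ab].
  + exact: clop_ultset0.
  + exact: clop_ultsetT.
  + exact: clop_ultsetU.
  + exact/clop_ultset_le.
- apply: brel_ext => a U; have [c ->] := clop_ultset_surj U.
  by rewrite bcomp_alg_counit_invr // (S5_bcomp hS) /alg_counit_inv SR_RS_clop_ultset.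
- apply: brel_ext => b U.
  change (bcomp SR' SR' (clop_ultset b) U <-> SR' (clop_ultset b) U).
  by rewrite (S5_bcomp SR_RS_S5).
Qed.

Lemma alg_counit_iso :
  [/\ compat_sub SR' S (alg_counit S), compat_sub S SR' (alg_counit_inv S),
      bcomp (alg_counit S) (alg_counit_inv S) = SR' &
      bcomp (alg_counit_inv S) (alg_counit S) = S].
Proof.
split; [exact: alg_counit_compat | exact: alg_counit_inv_compat | |].
- apply: brel_ext => U W; have [a ->] := clop_ultset_surj U; have [c ->] := clop_ultset_surj W.
  by rewrite bcomp_alg_counitl // bcomp_alg_counit_invr // (S5_bcomp hS) SR_RS_clop_ultset.
- apply: brel_ext => a b.
  by change (bcomp SR' SR' (clop_ultset a) (clop_ultset b) <-> S a b);
    rewrite (S5_bcomp SR_RS_S5) SR_RS_clop_ultset.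
Qed.

End AlgebraCounit.

Lemma alg_counit_natural {dA dB : Order.disp_t} {A : ctbDistrLatticeType dA}
  {B : ctbDistrLatticeType dB} (S : A -> A -> Prop) (S' : B -> B -> Prop) (T : A -> B -> Prop) :
  S5_subordination S -> S5_subordination S' -> compat_sub S S' T ->
  bcomp (SR (RS T)) (alg_counit S') = bcomp (alg_counit S) T.
Proof.
move=> [sS _ _ _] [sS' _ _ _] [sT ST TS'].
apply: brel_ext => U b; have [a ->] := clop_ultset_surj U.
rewrite bcomp_alg_counitl // ST.
change (bcomp (SR (RS T)) (SR (RS S')) (clop_ultset a) (clop_ultset b) <-> T a b).
by rewrite bcomp_SR_RS_clop_ultset // TS'.
Qed.

Theorem theorem3p8 :
  (* F is well defined on objects *)
  (forall (X : topologicalType) (E : set (X * X)),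
      stone_space X -> closed_equiv E -> S5_subordination (SR E)) /\
  (* F is well defined on morphisms *)
  (forall (X Y : topologicalType) (E : set (X * X)) (E' : set (Y * Y)) (R : set (X * Y)),
      stone_space X -> stone_space Y -> closed_equiv E -> closed_equiv E' ->
      compat_closed_rel E E' R -> compat_sub (SR E) (SR E') (SR R)) /\
  (* F preserves composition (identities are preserved by definition: F(E) = S_E) *)
  (forall (X Y Z : topologicalType) (E : set (X * X)) (E' : set (Y * Y)) (E'' : set (Z * Z))
      (R : set (X * Y)) (R' : set (Y * Z)),
      stone_space X -> stone_space Y -> stone_space Z ->
      closed_equiv E -> closed_equiv E' -> closed_equiv E'' ->
      compat_closed_rel E E' R -> compat_closed_rel E' E'' R' ->
      SR (rcomp R R') = bcomp (SR R) (SR R')) /\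
  (* F preserves binary meets of morphisms *)
  (forall (X Y : topologicalType) (E : set (X * X)) (E' : set (Y * Y)) (R1 R2 M : set (X * Y)),
      stone_space X -> stone_space Y -> closed_equiv E -> closed_equiv E' ->
      compat_closed_rel E E' R1 -> compat_closed_rel E E' R2 ->
      is_meet_ccr E E' R1 R2 M ->
      is_meet_csub (SR E) (SR E') (SR R1) (SR R2) (SR M)) /\
  (* F commutes with daggers *)
  (forall (X Y : topologicalType) (E : set (X * X)) (E' : set (Y * Y)) (R : set (X * Y)),
      stone_space X -> stone_space Y -> closed_equiv E -> closed_equiv E' ->
      compat_closed_rel E E' R -> SR (rconv R) = bdag (SR R)) /\
  (* G is well defined on objects *)
  (forall (d : Order.disp_t) (B : ctbDistrLatticeType d) (S : B -> B -> Prop),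
      S5_subordination S -> stone_space (Ult B) /\ closed_equiv (RS S)) /\
  (* G is well defined on morphisms *)
  (forall (dA dB : Order.disp_t) (A : ctbDistrLatticeType dA) (B : ctbDistrLatticeType dB)
      (S : A -> A -> Prop) (S' : B -> B -> Prop) (T : A -> B -> Prop),
      S5_subordination S -> S5_subordination S' -> compat_sub S S' T ->
      compat_closed_rel (RS S) (RS S') (RS T)) /\
  (* G preserves composition (identities are preserved by definition: G(S) = R_S) *)
  (forall (dA dB dC : Order.disp_t) (A : ctbDistrLatticeType dA)
      (B : ctbDistrLatticeType dB) (C : ctbDistrLatticeType dC)
      (S : A -> A -> Prop) (S' : B -> B -> Prop) (S'' : C -> C -> Prop)
      (T : A -> B -> Prop) (T' : B -> C -> Prop),
      S5_subordination S -> S5_subordination S' -> S5_subordination S'' ->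
      compat_sub S S' T -> compat_sub S' S'' T' ->
      RS (bcomp T T') = rcomp (RS T) (RS T')) /\
  (* natural isomorphism Id ~= G o F on StoneE^R *)
  (exists (alpha : forall (X : topologicalType), set (X * X) -> set (X * Ult (Clop X)))
          (beta : forall (X : topologicalType), set (X * X) -> set (Ult (Clop X) * X)),
      (forall (X : topologicalType) (E : set (X * X)),
          stone_space X -> closed_equiv E ->
          [/\ compat_closed_rel E (RS (SR E)) (alpha X E),
              compat_closed_rel (RS (SR E)) E (beta X E),
              rcomp (alpha X E) (beta X E) = E &
              rcomp (beta X E) (alpha X E) = RS (SR E)]) /\
      (forall (X Y : topologicalType) (E : set (X * X)) (E' : set (Y * Y)) (R : set (X * Y)),
          stone_space X -> stone_space Y -> closed_equiv E -> closed_equiv E' ->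
          compat_closed_rel E E' R ->
          rcomp (alpha X E) (RS (SR R)) = rcomp R (alpha Y E'))) /\
  (* natural isomorphism F o G ~= Id on SubS5^S *)
  (exists (eps : forall (d : Order.disp_t) (B : ctbDistrLatticeType d),
                   (B -> B -> Prop) -> Clop (Ult B) -> B -> Prop)
          (delta : forall (d : Order.disp_t) (B : ctbDistrLatticeType d),
                   (B -> B -> Prop) -> B -> Clop (Ult B) -> Prop),
      (forall (d : Order.disp_t) (B : ctbDistrLatticeType d) (S : B -> B -> Prop),
          S5_subordination S ->
          [/\ compat_sub (SR (RS S)) S (eps d B S),
              compat_sub S (SR (RS S)) (delta d B S),
              bcomp (eps d B S) (delta d B S) = SR (RS S) &
              bcomp (delta d B S) (eps d B S) = S]) /\
      (forall (dA dB : Order.disp_t) (A : ctbDistrLatticeType dA) (B : ctbDistrLatticeType dB)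
          (S : A -> A -> Prop) (S' : B -> B -> Prop) (T : A -> B -> Prop),
          S5_subordination S -> S5_subordination S' -> compat_sub S S' T ->
          bcomp (SR (RS T)) (eps dB B S') = bcomp (eps dA A S) T)).
Proof.
split; first by move=> X E; exact: SR_S5.
split; first by move=> X Y E E' R; exact: SR_compat.
split.
  by move=> X Y Z E E' E'' R R' sX sY sZ _ _ _ [cR _ _] [cR' _ _]; exact: SR_rcomp.
split; first by move=> X Y E E' R1 R2 M sX sY; exact: SR_meet.
split; first by move=> X Y E E' R *; exact: SR_rconv.
split; first by move=> d B S hS; split; [exact: ult_stone | exact: RS_S5].
split; first by move=> dA dB A B S S' T; exact: RS_compat.
split.
  by move=> dA dB dC A B C S S' S'' T T' _ _ _ [sT _ _] [sT' _ _]; exact: RS_rcomp.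
split.
  exists (fun X E => stone_unit E), (fun X E => stone_unit_inv E).
  by split=> [X E sX hE | X Y E E' R]; [exact: stone_unit_iso | exact: stone_unit_natural].
exists (fun d B => @alg_counit d B), (fun d B => @alg_counit_inv d B).
by split=> [d B S hS | dA dB A B S S' T]; [exact: alg_counit_iso | exact: alg_counit_natural].
Qed.
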